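(* Let $Q$ be a conjunctive query over $\mathcal{D}^p$, $D^p$ an instance of $\mathcal{D}^p$ (consistent w.r.t. a set $\mathcal{IC}$ of denial constraints), and $\vec t$ an answer of $Q$ with minimum probability $p^{\min}$ and maximum probability $p^{\max}$. Let $m$ be the number of tuples in $D^p$ plus $3$, and $a$ the maximum among the numerators and denominators of the probabilities of the tuples of $D^p$. Then $p^{\min}$ and $p^{\max}$ are expressible as fractions $\eta/\delta$ with integers $0\le\eta\le(ma)^m$ and $0<\delta\le(ma)^m$.
   Context: A PDB instance $D^p$ of a schema $\mathcal{D}^p$ is a finite set of tuples, each with a rational probability $p(t)\in[0,1]$ given as a fraction. Possible worlds are subsets of its tuples; an interpretation is a probability distribution on possible worlds such that the total probability of worlds containing $t$ is $p(t)$. A model w.r.t. a set $\mathcal{IC}$ of denial constraints is an interpretation assigning probability $0$ to every world violating $\mathcal{IC}$. A conjunctive query is $Q(\vec x)=\exists\vec z.\,R_1(\vec y_1)\wedge\dots\wedge R_m(\vec y_m)\wedge\phi$, $\phi$ a conjunction of comparisons. For a model $M$ and ground tuple $\vec t$, $p^M_Q(\vec t)$ is the total $M$-probability of worlds $w$ with $w\models Q(\vec t)$. $\vec t$ is an answer of $Q$ with minimum probability $p^{\min}=\min_M p^M_Q(\vec t)$ and maximum probability $p^{\max}=\max_M p^M_Q(\vec t)$ over all models $M$ (where $\vec t$ is required to satisfy $w\models Q(\vec t)$ for some possible world $w$). *)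

From HB Require Import structures.
From mathcomp Require Import all_boot all_order all_algebra.
From mathcomp Require Import boolp reals.
Set Implicit Arguments. Unset Strict Implicit. Unset Printing Implicit Defensive.
Import Order.TTheory GRing.Theory Num.Theory.
Local Open Scope ring_scope.

(* Data values are rationals (a totally ordered domain for comparisons). *)
(* A fact (ground tuple) of the database: relation symbol and its values. *)
Definition fact := (nat * seq rat)%type.

Inductive term := TVar of nat | TCst of rat.
Inductive cmpop := CEq | CNeq | CLt | CLe.

Definition atom := (nat * seq term)%type.
Definition comparison := (cmpop * term * term)%type.

(* Conjunctive query Q(x) = exists z. R1(y1) /\ ... /\ Rm(ym) /\ phi.
   cq_free lists the free variables x (in order); every other variable
   occurring in the atoms/comparisons is existentially quantified. *)
Record cq := CQ { cq_free : seq nat; cq_atoms : seq atom; cq_cmps : seq comparison }.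

(* Denial constraint: not (exists z. R1(y1) /\ ... /\ Rk(yk) /\ phi). *)
Record denial := DC { dc_atoms : seq atom; dc_cmps : seq comparison }.

Definition eval_term (nu : nat -> rat) (t : term) : rat :=
  match t with TVar x => nu x | TCst c => c end.

Definition cmp_holds (nu : nat -> rat) (c : comparison) : Prop :=
  let: (o, t1, t2) := c in
  let v1 := eval_term nu t1 in let v2 := eval_term nu t2 in
  match o with
  | CEq => v1 = v2
  | CNeq => v1 <> v2
  | CLt => v1 < v2
  | CLe => v1 <= v2
  end.

(* The body (atoms and comparisons) holds in world w (a subset of the tuples
   'I_n, tup i being the i-th tuple) under the valuation nu. *)
Definition body_holds (n : nat) (tup : 'I_n -> fact) (w : {set 'I_n})
    (atoms : seq atom) (cmps : seq comparison) (nu : nat -> rat) : Prop :=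
  foldr (fun a P => (exists i, i \in w /\ tup i = (a.1, map (eval_term nu) a.2)) /\ P)
        True atoms /\
  foldr (fun c P => cmp_holds nu c /\ P) True cmps.

Definition sat_cq (n : nat) (tup : 'I_n -> fact) (Q : cq) (t : seq rat)
    (w : {set 'I_n}) : Prop :=
  exists nu, map nu (cq_free Q) = t /\ body_holds tup w (cq_atoms Q) (cq_cmps Q) nu.

Definition violates (n : nat) (tup : 'I_n -> fact) (IC : seq denial)
    (w : {set 'I_n}) : Prop :=
  foldr (fun d P => (exists nu, body_holds tup w (dc_atoms d) (dc_cmps d) nu) \/ P)
        False IC.

Definition interpretation (R : realType) (n : nat) (prob : 'I_n -> rat)
    (M : {ffun {set 'I_n} -> R}) : Prop :=
  (forall w, 0 <= M w) /\ \sum_(w : {set 'I_n}) M w = 1 /\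
  forall i : 'I_n, \sum_(w : {set 'I_n} | i \in w) M w = ratr (prob i).

Definition model (R : realType) (n : nat) (tup : 'I_n -> fact) (prob : 'I_n -> rat)
    (IC : seq denial) (M : {ffun {set 'I_n} -> R}) : Prop :=
  interpretation prob M /\ forall w, violates tup IC w -> M w = 0.

Definition consistent (R : realType) (n : nat) (tup : 'I_n -> fact)
    (prob : 'I_n -> rat) (IC : seq denial) : Prop :=
  exists M : {ffun {set 'I_n} -> R}, model tup prob IC M.

Definition probQ (R : realType) (n : nat) (tup : 'I_n -> fact) (Q : cq) (t : seq rat)
    (M : {ffun {set 'I_n} -> R}) : R :=
  \sum_(w : {set 'I_n} | `[< sat_cq tup Q t w >]) M w.

Definition is_min_prob (R : realType) (n : nat) (tup : 'I_n -> fact) (prob : 'I_n -> rat)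
    (IC : seq denial) (Q : cq) (t : seq rat) (p : R) : Prop :=
  (exists M, model tup prob IC M /\ probQ tup Q t M = p) /\
  forall M, model tup prob IC M -> p <= probQ tup Q t M.

Definition is_max_prob (R : realType) (n : nat) (tup : 'I_n -> fact) (prob : 'I_n -> rat)
    (IC : seq denial) (Q : cq) (t : seq rat) (p : R) : Prop :=
  (exists M, model tup prob IC M /\ probQ tup Q t M = p) /\
  forall M, model tup prob IC M -> probQ tup Q t M <= p.

Definition max_numden (n : nat) (prob : 'I_n -> rat) : nat :=
  \max_(i < n) maxn `|numq (prob i)|%N `|denq (prob i)|%N.

Definition bounded_fraction (R : realType) (B : nat) (p : R) : Prop :=
  exists eta delta : nat,
    (eta <= B)%N /\ (0 < delta <= B)%N /\ p = eta%:R / delta%:R.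

From HB Require Import structures.
From mathcomp Require Import all_boot all_order all_algebra all_fingroup.
From mathcomp Require Import boolp reals.
Import Order.TTheory GRing.Theory Num.Theory.
Local Open Scope ring_scope.
Set Implicit Arguments. Unset Strict Implicit. Unset Printing Implicit Defensive.

(* Models are the nonnegative solutions of the linear system "total mass 1,
   marginal of tuple j equals p(t_j)" (n+1 equations with 0/1 coefficients)
   that vanish on violating worlds, and p^M_Q(t) is a linear function of M.
   Starting from a model attaining the optimum, moving along null directions
   of the system inside its support never changes the value (otherwise a
   small step either way would beat the optimum), so the support can be
   shrunk until its columns are linearly independent.  Cramer's rule on a
   nonsingular square 0/1 subsystem then writes each M(w) as an integer
   combination of the right-hand sides divided by a determinant of absolute
   value at most (n+1)!, and clearing the denominators of the p(t_j) gives a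
   denominator at most (n+1)! a^n <= (ma)^m. *)

Definition supp (R : zmodType) (T : finType) (x : T -> R) := [set w | x w != 0].

Lemma supp_subset_eq0 (R : zmodType) (T : finType) (x d : T -> R) w :
  supp d \subset supp x -> x w = 0 -> d w = 0.
Proof.
move=> /subsetP /(_ w) sdx xw0; apply/eqP; move: sdx.
by rewrite !inE xw0 eqxx; case: eqP => // _ /(_ isT).
Qed.

Section ExtremePoints.
Variables (R : realFieldType) (T : finType) (k : nat).
Variables (A : 'I_k -> T -> bool) (b : 'I_k -> R).
Implicit Types (x d c : T -> R) (lam : R).

Definition feasible x :=
  (forall w, 0 <= x w) /\ forall i, \sum_w (A i w)%:R * x w = b i.

Definition null_dir d := forall i, \sum_w (A i w)%:R * d w = 0.

Definition extreme x :=
  forall d, null_dir d -> supp d \subset supp x -> forall w, d w = 0.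

Definition linobj c x := \sum_w c w * x w.

Lemma feasible_shift x d lam : feasible x -> null_dir d ->
  (forall w, 0 <= x w + lam * d w) -> feasible (fun w => x w + lam * d w).
Proof.
move=> [_ Ax] Ad pos; split=> // i.
under eq_bigr do rewrite mulrDr mulrCA.
by rewrite big_split /= -mulr_sumr Ax Ad mulr0 addr0.
Qed.

Lemma supp_shift x d lam :
  supp d \subset supp x -> supp (fun w => x w + lam * d w) \subset supp x.
Proof.
move=> sdx; apply/subsetP => w; rewrite !inE; apply: contraNN => /eqP xw0.
by rewrite xw0 (supp_subset_eq0 sdx xw0) mulr0 addr0.
Qed.

Lemma linobj_shift c x d lam :
  linobj c (fun w => x w + lam * d w) = linobj c x + lam * linobj c d.
Proof.
rewrite /linobj mulr_sumr -big_split /=.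
by apply: eq_bigr => w _; rewrite mulrDr mulrCA.
Qed.

Lemma linobjNl c x : linobj (fun w => - c w) x = - linobj c x.
Proof. by rewrite /linobj -sumrN; apply: eq_bigr => w _; rewrite mulNr. Qed.

Lemma linobjNr c x : linobj c (fun w => - x w) = - linobj c x.
Proof. by rewrite /linobj -sumrN; apply: eq_bigr => w _; rewrite mulrN. Qed.

Lemma null_dirN d : null_dir d -> null_dir (fun w => - d w).
Proof.
by move=> Ad i; under eq_bigr do rewrite mulrN; rewrite sumrN Ad oppr0.
Qed.

Lemma suppN d : supp (fun w => - d w) = supp d.
Proof. by apply/setP => w; rewrite !inE oppr_eq0. Qed.

(* The ratio test of the simplex method: the largest step keeping [x]
   nonnegative vanishes at a point of the support of [x]. *)
Lemma exists_blocking_step x d : (forall w, 0 <= x w) ->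
  supp d \subset supp x -> (exists w, d w < 0) ->
  exists2 lam, 0 < lam & (forall w, 0 <= x w + lam * d w) /\
    exists w, x w != 0 /\ x w + lam * d w = 0.
Proof.
move=> x_ge0 sdx [w0 dw0].
pose ratio w := x w / - d w.
case: (@arg_minP _ _ _ w0 (fun w => d w < 0) ratio dw0) => w1 dw1 ratio_min.
have dw1N : 0 < - d w1 by rewrite oppr_gt0.
have xw1 : x w1 != 0.
  by apply: contraTneq dw1 => /(supp_subset_eq0 sdx) ->; rewrite ltxx.
have xw1_gt0 : 0 < x w1 by rewrite lt_def xw1 x_ge0.
have ratio_gt0 : 0 < ratio w1 by rewrite divr_gt0.
exists (ratio w1) => //.
split; last first.
  by exists w1; split=> //; rewrite /ratio invrN mulrN mulNr divfK ?subrr // lt_eqF.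
move=> w; case: (ltP (d w) 0) => dw; last by rewrite addr_ge0 // mulr_ge0 // ltW.
have dwN : 0 < - d w by rewrite oppr_gt0.
have := ratio_min w dw; rewrite /ratio -(ler_pM2r dwN) divfK ?gt_eqF //.
by rewrite mulrN -subr_ge0 opprK.
Qed.

Lemma exists_pos_step x d : (forall w, 0 <= x w) -> supp d \subset supp x ->
  exists2 lam, 0 < lam & forall w, 0 <= x w + lam * d w.
Proof.
move=> x_ge0 sdx; have [neg|] := pselect (exists w, d w < 0).
  by have [lam lam_gt0 [pos _]] := exists_blocking_step x_ge0 sdx neg; exists lam.
move=> /forallNP d_ge0; exists 1 => // w.
by rewrite mul1r addr_ge0 // leNgt; apply/negP/d_ge0.
Qed.

Lemma linobj_orth_min c x : feasible x ->
  (forall y, feasible y -> supp y \subset supp x -> linobj c x <= linobj c y) ->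
  forall d, null_dir d -> supp d \subset supp x -> linobj c d = 0.
Proof.
move=> fx x_min d Ad sdx.
have sNdx : supp (fun w => - d w) \subset supp x by rewrite suppN.
have [l1 l1_gt0 pos1] := exists_pos_step fx.1 sdx.
have [l2 l2_gt0 pos2] := exists_pos_step fx.1 sNdx.
have := x_min _ (feasible_shift fx Ad pos1) (supp_shift l1 sdx).
have := x_min _ (feasible_shift fx (null_dirN Ad) pos2) (supp_shift l2 sNdx).
rewrite !linobj_shift linobjNr mulrN !lerDl oppr_ge0 pmulr_rle0 // pmulr_rge0 //.
by move=> d_le0 d_ge0; apply/eqP; rewrite eq_le d_le0.
Qed.

Lemma linobj_orth_max c x : feasible x ->
  (forall y, feasible y -> supp y \subset supp x -> linobj c y <= linobj c x) ->
  forall d, null_dir d -> supp d \subset supp x -> linobj c d = 0.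
Proof.
move=> fx x_max d Ad sdx; apply/eqP; rewrite -oppr_eq0 -linobjNl; apply/eqP.
by apply: (linobj_orth_min fx) => // y fy syx; rewrite !linobjNl lerN2 x_max.
Qed.

Lemma exists_extreme c x : feasible x ->
  (forall d, null_dir d -> supp d \subset supp x -> linobj c d = 0) ->
  exists y, [/\ feasible y, extreme y, supp y \subset supp x
              & linobj c y = linobj c x].
Proof.
have [s] := ubnP #|supp x|; elim: s x => // s IH x supp_lt fx orth.
have [|] := pselect (extreme x); first by exists x.
move=> /existsNP [d0] /not_implyP [Ad0] /not_implyP [sd0x] /existsNP [w0 /eqP dw0].
have [d [Ad sdx dneg]] : exists d, [/\ null_dir d, supp d \subset supp x
                                     & exists w, d w < 0].
  case: (ltrgtP (d0 w0) 0) => [d0w0_lt0|d0w0_gt0|/eqP]; last by rewrite (negbTE dw0).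
    by exists d0; split=> //; exists w0.
  exists (fun w => - d0 w); split; [exact: null_dirN | by rewrite suppN |].
  by exists w0; rewrite oppr_lt0.
have [lam _ [pos [w1 [xw1 yw1]]]] := exists_blocking_step fx.1 sdx dneg.
have sx1x := supp_shift lam sdx.
pose x1 w := x w + lam * d w.
have supp_x1_lt : (#|supp x1| < s)%N.
  apply: leq_trans (proper_card _) supp_lt; apply/properP; split=> //.
  by exists w1; rewrite inE // /x1 yw1 eqxx.
have [y [fy ey szy oy]] := IH _ supp_x1_lt (feasible_shift fx Ad pos)
  (fun d' Ad' sd' => orth d' Ad' (subset_trans sd' sx1x)).
exists y; split=> //; first exact: subset_trans szy sx1x.
by rewrite oy /x1 linobj_shift (orth d) // mulr0 addr0.
Qed.

End ExtremePoints.

Lemma norm_det_le_fact (R : numDomainType) m (M : 'M[R]_m) :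
  (forall i j, 0 <= M i j <= 1) -> `|\det M| <= m`!%:R.
Proof.
move=> M01; apply: le_trans (ler_norm_sum _ _ _) _.
rewrite -card_Sn -sumr_const; apply: ler_sum => s _.
rewrite normrM normrX normrN1 expr1n mul1r ger0_norm.
  by apply: prodr_ile1 => i _; exact: M01.
by apply: prodr_ge0 => i _; case/andP: (M01 i (s i)).
Qed.

Section Cramer.
Variables (R : archiRealFieldType) (T : finType) (k : nat).
Variables (A : 'I_k -> T -> bool) (b : 'I_k -> R) (x : T -> R).
Hypotheses (fx : feasible A b x) (ex : extreme A x).

Let e : 'I_#|supp x| -> T := enum_val.
Let incidence : 'M[int]_(#|supp x|, k) := \matrix_(j, i) (A i (e j))%:R.

Lemma sum_supp (g : T -> R) : \sum_w g w * x w = \sum_j g (e j) * x (e j).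
Proof.
rewrite (bigID (mem (supp x))) /= [X in _ + X]big1 ?addr0.
  exact: (big_enum_val (fun w => g w * x w)).
by move=> w; rewrite inE negbK => /eqP ->; rewrite mulr0.
Qed.

Lemma incidence_row_free : row_free (map_mx intr incidence : 'M[R]_(_, _)).
Proof.
apply: inj_row_free => v vC.
pose d w := \sum_(j | e j == w) v 0 j.
have d_sum g : \sum_w g w * d w = \sum_j g (e j) * v 0 j.
  under eq_bigr do rewrite mulr_sumr big_mkcond.
  rewrite exchange_big /=; apply: eq_bigr => j _.
  by rewrite -big_mkcond /= (big_pred1 (e j)) // => w; rewrite eq_sym.
have Ad : null_dir A d.
  move=> i; rewrite d_sum; have := congr1 (fun u : 'rV_k => u 0 i) vC.
  rewrite !mxE; apply: etrans; apply: eq_bigr => j _.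
  by rewrite !mxE mulrC rmorph_nat.
have sdx : supp d \subset supp x.
  apply/subsetP => w; apply: contraLR; rewrite !inE !negbK => wx.
  rewrite /d big_pred0 //.
  move=> j; apply/negbTE; apply: contraTneq (enum_valP j) => ejw.
  by rewrite inE negbK -[enum_val j]/(e j) ejw.
apply/rowP => j; have := ex Ad sdx (e j).
by rewrite /d (big_pred1 j) ?mxE // => j'; rewrite (inj_eq enum_val_inj).
Qed.

(* Cramer's rule on a nonsingular square subsystem [B] of the incidence rows
   on the support: [det B *: x = adj B *m b], with [B] a 0/1 integer matrix. *)
Lemma extreme_scaled_int (D : R) : (forall i, b i * D \is a Num.int) ->
  exists2 delta : int, delta != 0 /\ (`|delta| <= k`!)%N &
    forall w, delta%:~R * D * x w \is a Num.int.
Proof.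
move=> bD_int.
have fullT : row_full (map_mx intr incidence : 'M[R]_(_, _))^T.
  by rewrite /row_full mxrank_tr; exact: incidence_row_free.
pose f := fullrankfun fullT.
pose BZ := rowsub f incidence^T.
pose B := map_mx intr BZ : 'M[R]_#|supp x|.
have B_unit : B \in unitmx.
  have -> : B = rowsub f (map_mx intr incidence)^T by apply/matrixP => i j; rewrite !mxE.
  exact: fullrowsub_unit.
have supp_le : (#|supp x| <= k)%N.
  by have := leq_card _ (@fullrankfun_inj _ _ _ _ fullT); rewrite !card_ord.
have Bx : B *m (\col_j x (e j)) = \col_j b (f j).
  apply/colP => l; rewrite !mxE -(fx.2 (f l)) sum_supp.
  by apply: eq_bigr => j _; rewrite !mxE rmorph_nat.
have cramer : \det B *: (\col_j x (e j)) = \adj B *m \col_j b (f j).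
  by rewrite -Bx mulmxA mul_adj_mx mul_scalar_mx.
have detB : \det B = (\det BZ)%:~R by rewrite det_map_mx.
exists (\det BZ); first split.
- by move: B_unit; rewrite unitmxE unitfE detB intr_eq0.
- apply: leq_trans (leq_fact supp_le); rewrite -(ler_nat R) natr_absz intr_norm -detB.
  by apply: norm_det_le_fact => i j; rewrite !mxE rmorph_nat ler0n lern1 leq_b1.
move=> w; have [wx|] := boolP (w \in supp x); last first.
  by rewrite inE negbK => /eqP ->; rewrite mulr0 rpred0.
rewrite -(enum_rankK_in wx wx) -/(e _); set j := enum_rank_in wx w.
have := congr1 (fun u : 'cV_#|supp x| => u j 0) cramer.
rewrite /B -map_mx_adj !mxE -detB mulrAC => ->.
by rewrite mulr_suml rpred_sum // => i _; rewrite !mxE -mulrA rpredM ?rpred_int.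
Qed.

End Cramer.

Lemma fact_le_expn m : (m`! <= m ^ m)%N.
Proof.
elim: m => // m IH; rewrite factS expnS leq_mul2l /=.
by apply: leq_trans IH _; case: m => // m; rewrite leq_exp2r.
Qed.

Lemma sum_indicator (R : pzSemiRingType) (T : finType) (P : pred T) (F : T -> R) :
  \sum_w (P w)%:R * F w = \sum_(w | P w) F w.
Proof.
by rewrite [RHS]big_mkcond; apply: eq_bigr => w _; rewrite mulr_natl mulrb.
Qed.

Lemma finfun_funE (T : finType) (R : Type) (y : T -> R) : finfun y = y :> (T -> R).
Proof. by apply/funext => w; rewrite ffunE. Qed.

Lemma bounded_fraction_of_int (R : realType) B (p : R) (D : int) :
  0 <= p <= 1 -> D != 0 -> (`|D| <= B)%N -> p * D%:~R \is a Num.int ->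
  bounded_fraction B p.
Proof.
move=> /andP [p_ge0 p_le1] D_neq0 D_le pD_int.
have /natrP [eta eta_def] : `|p * D%:~R| \is a Num.nat by exact: natr_norm_int.
have etaE : eta%:R = p * `|D|%:R.
  by rewrite -eta_def normrM ger0_norm // natr_absz intr_norm.
exists eta, `|D|%N; split; [|split].
- by apply: leq_trans D_le; rewrite -(ler_nat R) etaE ler_piMl.
- by rewrite absz_gt0 D_neq0.
- by rewrite etaE mulfK // pnatr_eq0 absz_eq0.
Qed.

(* Row [0] of the marginal system states that [M] has total mass [1], row
   [lift 0 j] that tuple [j] has marginal probability [prob j]. *)
Definition marginal_row n (i : 'I_n.+1) (w : {set 'I_n}) : bool :=
  if unlift ord0 i is Some j then j \in w else true.

Definition marginal_rhs (R : realType) n (prob : 'I_n -> rat) (i : 'I_n.+1) : R :=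
  if unlift ord0 i is Some j then ratr (prob j) else 1.

Definition den_prod n (prob : 'I_n -> rat) := (\prod_(i < n) `|denq (prob i)|)%N.

Lemma den_prod_gt0 n (prob : 'I_n -> rat) : (0 < den_prod prob)%N.
Proof. by rewrite prodn_gt0 // => i; rewrite absz_gt0 denq_neq0. Qed.

Lemma den_prod_le n (prob : 'I_n -> rat) : (den_prod prob <= max_numden prob ^ n)%N.
Proof.
rewrite -[n in (_ ^ n)%N]card_ord -prod_nat_const; apply: leq_prod => i _.
by apply: leq_trans (leq_maxr `|numq (prob i)|%N _) _; exact: leq_bigmax.
Qed.

Lemma max_numden_gt0 n (prob : 'I_n -> rat) (i : 'I_n) : (0 < max_numden prob)%N.
Proof.
apply: leq_trans (leq_bigmax_cond i isT); apply: leq_trans (leq_maxr _ _).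
by rewrite absz_gt0 denq_neq0.
Qed.

Section ProbabilisticDatabase.
Variables (R : realType) (n : nat) (tup : 'I_n -> fact) (prob : 'I_n -> rat).
Variables (IC : seq denial) (Q : cq) (t : seq rat).

Let feasible_marginals := feasible (@marginal_row n) (@marginal_rhs R n prob).
Implicit Types (M : {ffun {set 'I_n} -> R}) (y : {set 'I_n} -> R).

Let sat_indicator w : R := (`[< sat_cq tup Q t w >] : bool)%:R.

Lemma interpretationE M : interpretation prob M <-> feasible_marginals M.
Proof.
rewrite /feasible_marginals /feasible; split=> [[M_ge0 [M1 Mm]] | [M_ge0 rows]].
  split=> // i; rewrite sum_indicator /marginal_row /marginal_rhs.
  by case: unliftP => [j _|_]; rewrite ?Mm.
split=> //; split.
  by have := rows ord0; rewrite sum_indicator /marginal_row /marginal_rhs unlift_none.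
by move=> i; have := rows (lift ord0 i); rewrite sum_indicator /marginal_row /marginal_rhs liftK.
Qed.

Lemma model_feasible M : model tup prob IC M -> feasible_marginals M.
Proof. by move=> [/interpretationE]. Qed.

Lemma model_of_feasible M y : model tup prob IC M -> feasible_marginals y ->
  supp y \subset supp M -> model tup prob IC (finfun y).
Proof.
move=> [_ M_viol] fy syM; split; first by apply/interpretationE; rewrite finfun_funE.
by move=> w /M_viol Mw0; rewrite ffunE (supp_subset_eq0 syM Mw0).
Qed.

Lemma probQ_finfun y : probQ tup Q t (finfun y) = linobj sat_indicator y.
Proof. by rewrite /linobj sum_indicator; apply: eq_bigr => w _; rewrite ffunE. Qed.

Lemma linobj_sat_ge0_le1 y : feasible_marginals y -> 0 <= linobj sat_indicator y <= 1.
Proof.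
move=> [y_ge0 rows]; rewrite /linobj sum_indicator sumr_ge0 //=.
have := rows ord0; rewrite sum_indicator /marginal_row /marginal_rhs unlift_none => <-.
by rewrite [X in _ <= X](bigID (fun w => `[< sat_cq tup Q t w >])) /= lerDl sumr_ge0.
Qed.

Lemma marginal_rhs_scaled_int i :
  @marginal_rhs R n prob i * (den_prod prob)%:R \is a Num.int.
Proof.
rewrite /marginal_rhs; case: unliftP => [j _|_]; last by rewrite mul1r rpred_nat.
rewrite /den_prod (bigD1 j) //= natrM mulrA natr_absz gtr0_norm ?denq_gt0 //.
by rewrite /ratr mulfVK ?intr_eq0 ?denq_neq0 // rpredM ?rpred_int ?rpred_nat.
Qed.

Lemma extreme_value_bounded y : (0 < max_numden prob)%N ->
  feasible_marginals y -> extreme (@marginal_row n) y ->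
  bounded_fraction (((n + 3) * max_numden prob) ^ (n + 3))%N (linobj sat_indicator y).
Proof.
move=> a_gt0 fy ey.
have [delta [delta_neq0 delta_le] delta_int] :=
  extreme_scaled_int fy ey marginal_rhs_scaled_int.
apply: (bounded_fraction_of_int (D := delta * (den_prod prob)%:Z)).
- exact: linobj_sat_ge0_le1.
- by rewrite mulf_neq0 // eqz_nat -lt0n den_prod_gt0.
- rewrite abszM expnMn absz_nat leq_mul //.
    apply: leq_trans delta_le (leq_trans (leq_fact _) (fact_le_expn _)).
    by rewrite addn3 ltnW.
  by apply: leq_trans (den_prod_le prob) _; rewrite leq_pexp2l // leq_addr.
- rewrite /linobj mulr_suml rpred_sum // => w _.
  by rewrite intrM -mulrA [y w * _]mulrC rpredM ?rpred_nat.
Qed.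

Lemma probQ_linobj M : probQ tup Q t M = linobj sat_indicator M.
Proof. by rewrite -probQ_finfun ffunK. Qed.

Lemma optimal_value_bounded M : (0 < max_numden prob)%N -> model tup prob IC M ->
  (forall d, null_dir (@marginal_row n) d -> supp d \subset supp M ->
     linobj sat_indicator d = 0) ->
  bounded_fraction (((n + 3) * max_numden prob) ^ (n + 3))%N (probQ tup Q t M).
Proof.
move=> a_gt0 mM orth; rewrite probQ_linobj.
have [y [fy ey _ <-]] := exists_extreme (model_feasible mM) orth.
exact: extreme_value_bounded.
Qed.

Lemma min_model_orth M : model tup prob IC M ->
  (forall M', model tup prob IC M' -> probQ tup Q t M <= probQ tup Q t M') ->
  forall d, null_dir (@marginal_row n) d -> supp d \subset supp M ->
    linobj sat_indicator d = 0.
Proof.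
move=> mM M_min; apply: (linobj_orth_min (model_feasible mM)) => y fy syM.
by rewrite -probQ_linobj -probQ_finfun; apply: M_min; exact: model_of_feasible mM fy syM.
Qed.

Lemma max_model_orth M : model tup prob IC M ->
  (forall M', model tup prob IC M' -> probQ tup Q t M' <= probQ tup Q t M) ->
  forall d, null_dir (@marginal_row n) d -> supp d \subset supp M ->
    linobj sat_indicator d = 0.
Proof.
move=> mM M_max; apply: (linobj_orth_max (model_feasible mM)) => y fy syM.
by rewrite -probQ_linobj -probQ_finfun; apply: M_max; exact: model_of_feasible mM fy syM.
Qed.

End ProbabilisticDatabase.

Theorem lemma2 (R : realType) (n : nat) (tup : 'I_n -> fact) (prob : 'I_n -> rat)
    (IC : seq denial) (Q : cq) (t : seq rat) (pmin pmax : R) :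
  injective tup ->
  (forall i, 0 <= prob i <= 1) ->
  consistent R tup prob IC ->
  (0 < size (cq_atoms Q))%N ->
  (exists w, sat_cq tup Q t w) ->
  is_min_prob tup prob IC Q t pmin ->
  is_max_prob tup prob IC Q t pmax ->
  let m := (n + 3)%N in
  let a := max_numden prob in
  bounded_fraction ((m * a) ^ m)%N pmin /\ bounded_fraction ((m * a) ^ m)%N pmax.
Proof.
move=> _ _ _ atoms_gt0 [w [nu [_ [atoms_hold _]]]].
move=> [[Mmin [mMmin <-]] Mmin_le] [[Mmax [mMmax <-]] Mmax_ge] m a.
have a_gt0 : (0 < a)%N.
  move: atoms_gt0 atoms_hold; case: (cq_atoms Q) => [|at0 ats] //= _ [[i _] _].
  exact: max_numden_gt0 i.
split.
  exact: optimal_value_bounded a_gt0 mMmin (min_model_orth mMmin Mmin_le).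
exact: optimal_value_bounded a_gt0 mMmax (max_model_orth mMmax Mmax_ge).
Qed.
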